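(* Let $K_{m_1,m_2}$ be the complete bipartite graph with bipartition $(X,Y)$, $X=\{x_1,\dots,x_{m_1}\}$, $Y=\{y_1,\dots,y_{m_2}\}$, where $2\le m_1\le m_2$. Let $s$ and $i$ be integers with $\max\{1,s-m_2\}\le i\le \min\{m_1,s-1\}$ and $s\ge m_2-m_1+3$, and let $S_i=\{x_1,\dots,x_i,y_1,\dots,y_{s-i}\}$. If $2\le 2i\le m_1+s-m_2$, then $$\kappa^*_{K_{m_1,m_2}}(S_i)\ge\begin{cases} m_1-i, & \text{if } 2\le 2i\le \frac{2(m_1+s-m_2)}{3},\\[2pt] m_2-(s-i)+\left\lfloor\frac{m_1+s-m_2-i}{2}\right\rfloor, & \text{if } \frac{2(m_1+s-m_2)}{3}<2i\le m_1+s-m_2.\end{cases}$$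
   Context: For $S\subseteq V(G)$ with $|S|\ge 2$, an $S$-Steiner tree of $G$ is a subtree $T$ of $G$ with $S\subseteq V(T)$ all of whose leaves belong to $S$. A family of $S$-Steiner trees $T_1,\dots,T_k$ is completely independent if for all $1\le p<q\le k$: $E(T_p)\cap E(T_q)=\emptyset$, $V(T_p)\cap V(T_q)=S$, and for any two vertices $x_1,x_2\in S$ the $(x_1,x_2)$-paths in $T_p$ and in $T_q$ are internally disjoint. $\kappa^*_G(S)$ is the maximum number of trees in a completely independent family of $S$-Steiner trees in $G$. *)

From Stdlib Require Import ClassicalEpsilon.
From mathcomp Require Import all_boot.
Set Implicit Arguments. Unset Strict Implicit. Unset Printing Implicit Defensive.

Section SteinerDefs.
Variable T : finType.
Variable e : rel T.

Definition gedges : {set {set T}} :=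
  [set f : {set T} | [exists x, exists y, e x y && (f == [set x; y])]].

Definition adjE (E : {set {set T}}) : rel T := fun a b => [set a; b] \in E.

Definition gpath (E : {set {set T}}) (x y : T) (p : seq T) : bool :=
  [&& path (adjE E) x p, last x p == y & uniq (x :: p)].

Definition interior (x y : T) (p : seq T) : {set T} :=
  [set v | (v \in p) && (v != x) && (v != y)].

Definition degE (E : {set {set T}}) (v : T) : nat := #|[set f in E | v \in f]|.

Definition is_subtree (V : {set T}) (E : {set {set T}}) : Prop :=
  [/\ V != set0,
      E \subset gedges,
      (forall f, f \in E -> f \subset V),
      (forall x y, x \in V -> y \in V -> exists p, gpath E x y p) &
      (forall c : seq T, uniq c -> 3 <= size c -> ~~ cycle (adjE E) c)].

Definition steiner_tree (S : {set T}) (V : {set T}) (E : {set {set T}}) : Prop :=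
  [/\ is_subtree V E, S \subset V &
      (forall v, v \in V -> degE E v = 1 -> v \in S)].

Definition CI_family (S : {set T}) (k : nat)
    (F : 'I_k -> {set T} * {set {set T}}) : Prop :=
  (forall j, steiner_tree S (F j).1 (F j).2) /\
  (forall p q : 'I_k, p != q ->
     [/\ (F p).2 :&: (F q).2 = set0,
         (F p).1 :&: (F q).1 = S &
         (forall x1 x2 P Q, x1 \in S -> x2 \in S ->
            gpath (F p).2 x1 x2 P -> gpath (F q).2 x1 x2 Q ->
            [disjoint interior x1 x2 P & interior x1 x2 Q])]).

Definition has_CI_family (S : {set T}) (k : nat) : Prop :=
  exists F : 'I_k -> {set T} * {set {set T}}, CI_family S F.

Definition decP (P : Prop) : bool :=
  if excluded_middle_informative P then true else false.

(* For |S| >= 2 every such tree has an edge and the trees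
   are edge-disjoint, so the size is at most #|gedges| <= #|T|^2; the range
   below therefore contains every possible size. *)
Definition kappa_star (S : {set T}) : nat :=
  \max_(k < (#|T| ^ 2).+2 | decP (has_CI_family S k)) k.

End SteinerDefs.

(* complete bipartite graph K_{m1,m2}: X = 'I_m1 (inl), Y = 'I_m2 (inr) *)
Definition Kvert (m1 m2 : nat) : finType := ('I_m1 + 'I_m2)%type.

Definition Kadj (m1 m2 : nat) : rel (Kvert m1 m2) := fun u v =>
  match u, v with
  | inl _, inr _ => true
  | inr _, inl _ => true
  | _, _ => false
  end.

(* S_i = {x_1..x_i, y_1..y_(s-i)} (0-indexed: x_a with a < i, y_b with b < s-i) *)
Definition S_i (m1 m2 s i : nat) : {set Kvert m1 m2} :=
  [set v : Kvert m1 m2 | match v with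
                         | inl a => (a < i)%N
                         | inr b => (b < s - i)%N
                         end].

(* A family of trees is given by a root and a parent map for each tree j, with a
   depth that strictly decreases towards the root; the edges of tree j are the
   pairs {v, parent j v}.  Such a tree is an S-Steiner tree as soon as every
   vertex outside S has a child, and the root two.  Complete independence then
   follows from three labellings: every edge {v, parent j v} is labelled j, every
   vertex outside S is labelled by the one tree containing it, and every vertex
   of S is labelled by the one tree in which it may be internal; this suffices
   because an interior vertex of a path in a tree is internal in that tree.

   In K_{m1,m2} let t = s - i and B = m2 - t be the numbers of terminal and
   non-terminal y's.  Tree j is rooted at the non-terminal x_{i+j}, joined to
   all terminal y's, and the terminal x's hang from a private hub: y_{t+j} for
   j < B, then the terminal y_{j-B}; this gives m1 - i trees.  Alternatively the
   B trees with non-terminal hubs can be completed by K = (m1 - B)/2 trees that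
   use two terminal hubs y_l and y_{K+l} each, whose root is a non-terminal x as
   long as one is left and a terminal x afterwards. *)

From Pilot Require Import Defs.
From mathcomp Require Import all_boot zify.
From Stdlib Require Import ClassicalEpsilon.
Set Implicit Arguments. Unset Strict Implicit. Unset Printing Implicit Defensive.

Lemma set2_inj (T : finType) (a b c d : T) :
  [set a; b] = [set c; d] -> (a = c /\ b = d) \/ (a = d /\ b = c).
Proof.
move=> E.
have /set2P ha : a \in [set c; d] by rewrite -E set21.
have /set2P hb : b \in [set c; d] by rewrite -E set22.
have /set2P hc : c \in [set a; b] by rewrite E set21.
have /set2P hd : d \in [set a; b] by rewrite E set22.
by case: ha hb hc hd => ? [] ? [] ? [] ?; subst; auto.
Qed.

Lemma degE_ge2 (T : finType) (E : {set {set T}}) v f1 f2 :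
  f1 \in E -> f2 \in E -> v \in f1 -> v \in f2 -> f1 != f2 -> 1 < degE E v.
Proof.
move=> f1E f2E vf1 vf2 f12.
have : [set f1; f2] \subset [set f in E | v \in f].
  by apply/subsetP => f /set2P [->|->]; rewrite inE ?f1E ?f2E.
by move/subset_leq_card; rewrite cards2 f12.
Qed.

Lemma gpath_interior_adj (T : finType) (E : {set {set T}}) x y p w :
  gpath E x y p -> w \in interior x y p ->
  exists n1 n2, [/\ adjE E n1 w, adjE E w n2 & n1 != n2].
Proof.
case/and3P => pth /eqP ly up; rewrite inE => /andP[/andP[wp _] wy].
move: pth ly up; case/splitPr: wp => p1 [|n2 p2] pth ly up.
  by rewrite last_cat /= in ly; rewrite ly eqxx in wy.
rewrite cat_path /= in pth; case/and4P: pth => _ a1 a2 _.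
exists (last x p1), n2; split => //; apply/eqP => n12.
rewrite -cat_cons cat_uniq in up; case/and3P: up => _ /hasP[]; exists n2.
  by rewrite !inE eqxx orbT.
by rewrite -n12 mem_last.
Qed.

Lemma leq_kappa_star (T : finType) (e : rel T) S k :
  k < (#|T| ^ 2).+2 -> has_CI_family e S k -> k <= kappa_star e S.
Proof.
move=> klt CI; have hP : Defs.decP (has_CI_family e S (Ordinal klt)).
  by rewrite /Defs.decP; case: excluded_middle_informative.
exact: (@leq_bigmax_cond _ (fun k : 'I__ => Defs.decP (has_CI_family e S k))
  (fun k => nat_of_ord k) _ hP).
Qed.

Section RootedTrees.
Variables (T : finType) (e : rel T) (S : {set T}) (k : nat).
Variables (owner inner_tree : T -> nat) (edge_tree : T -> T -> nat).
Variables (root : nat -> T) (parent : nat -> T -> T) (depth : nat -> T -> nat).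

Definition tree_verts j := S :|: [set v | owner v == j].
Definition tree_edges j := [set [set v; parent j v] | v in tree_verts j :\ root j].
Definition child j v u := [/\ u \in tree_verts j, u != root j & parent j u = v].
Definition internal j v := v = root j \/ exists u, child j v u.

Hypothesis edge_treeC : forall u v, edge_tree u v = edge_tree v u.
Hypothesis root_tree : forall j, j < k -> root j \in tree_verts j.
Hypothesis parentP : forall j, j < k -> forall v, v \in tree_verts j -> v != root j ->
  [/\ parent j v \in tree_verts j, depth j (parent j v) < depth j v,
      e v (parent j v) & edge_tree v (parent j v) = j].
Hypothesis children_notin_S : forall j, j < k -> forall v, v \in tree_verts j -> v \notin S ->
  exists2 u1, child j v u1 & (v != root j \/ exists2 u2, child j v u2 & u2 != u1).
Hypothesis internal_inner_tree : forall j, j < k -> forall v, v \in S ->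
  internal j v -> inner_tree v = j.

Section OneTree.
Variable j : nat.
Hypothesis jk : j < k.
Local Notation adj := (adjE (tree_edges j)).

Lemma tree_edgesP f : f \in tree_edges j ->
  exists v, [/\ v \in tree_verts j, v != root j & f = [set v; parent j v]].
Proof. by case/imsetP => v; rewrite in_setD1 => /andP[vr vV] ->; exists v. Qed.

Lemma parent_edge v : v \in tree_verts j -> v != root j ->
  [set v; parent j v] \in tree_edges j.
Proof. by move=> vV vr; apply/imsetP; exists v => //; rewrite in_setD1 vr. Qed.

Lemma tree_adjP x y : adj x y -> child j y x \/ child j x y.
Proof.
by case/tree_edgesP => v [vV vr /set2_inj [[-> ->]|[-> ->]]]; [left|right].
Qed.

Lemma tree_adjC : symmetric adj.
Proof. by move=> x y; rewrite /adjE setUC. Qed.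

Lemma child_depth v u : child j v u -> depth j v < depth j u.
Proof. by case=> uV ur <-; case: (parentP jk uV ur). Qed.

Lemma child_in_tree v u : child j v u -> v \in tree_verts j.
Proof. by case=> uV ur <-; case: (parentP jk uV ur). Qed.

Lemma connect_root v : v \in tree_verts j -> connect adj v (root j).
Proof.
elim: {v}_.+1 {-2}v (ltnSn (depth j v)) => // n IH v ltv vV.
have [->|vr] := eqVneq v (root j); first exact: connect0.
have [pV pd _ _] := parentP jk vV vr.
apply: connect_trans (IH _ (leq_trans pd ltv) pV).
by apply: connect1; apply: parent_edge.
Qed.

(* Both cycle-neighbours of a vertex of maximal depth would be its parent. *)
Lemma tree_acyclic c : uniq c -> 2 < size c -> ~~ cycle adj c.
Proof.
case: c => [//|z0 c0] uc sc; apply/negP => cyc.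
case: (@arg_maxnP _ z0 [in z0 :: c0] (depth j) (mem_head _ _)) => z zc zmax.
have [n s' rot_c] := rot_to zc.
have {cyc}: cycle adj (z :: s') by rewrite -rot_c rot_cycle.
have {uc}: uniq (z :: s') by rewrite -rot_c rot_uniq.
have {sc}: 1 < size s' by move: sc; rewrite -(size_rot n) rot_c.
have in_c w : w \in s' -> w \in z0 :: c0.
  by move=> ws; rewrite -(mem_rot n) rot_c inE ws orbT.
have to_parent w : adj z w -> w \in s' -> parent j z = w.
  case/tree_adjP => [[] _ _ //|/child_depth zw /in_c /zmax]; lia.
case: s' in_c to_parent {rot_c} => [|n1 [|y r]] //= _ to_parent _.
case/andP=> _ /andP[n1r _] /andP[a1]; rewrite rcons_path => /andP[_ /andP[_ a2]].
have p1 := to_parent _ a1 (mem_head _ _).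
have p2 : parent j z = last y r.
  apply: to_parent; first by rewrite tree_adjC.
  by rewrite in_cons mem_last orbT.
by move: n1r; rewrite -p1 p2 mem_last.
Qed.

Lemma tree_subtree : is_subtree e (tree_verts j) (tree_edges j).
Proof.
split.
- by apply/set0Pn; exists (root j); apply: root_tree.
- apply/subsetP => f /tree_edgesP [v [vV vr ->]]; rewrite inE.
  apply/existsP; exists v; apply/existsP; exists (parent j v).
  by have [_ _ -> _] := parentP jk vV vr; rewrite eqxx.
- move=> f /tree_edgesP [v [vV vr ->]]; apply/subsetP => x /set2P [->|->] //.
  by have [] := parentP jk vV vr.
- move=> x y xV yV.
  have: connect adj x y.
    apply: connect_trans (connect_root xV) _.
    by rewrite (sym_connect_sym tree_adjC); apply: connect_root.
  case/connectP => p /shortenP [p' pth' up' _] ->.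
  by exists p'; rewrite /gpath pth' eqxx up'.
- by move=> c uc sc; apply: tree_acyclic.
Qed.

Lemma child_edge v u : child j v u -> [set u; v] \in tree_edges j.
Proof. by case=> uV ur <-; apply: parent_edge. Qed.

Lemma tree_deg_notin_S v : v \in tree_verts j -> v \notin S -> 1 < degE (tree_edges j) v.
Proof.
move=> vV vS; have [u1 c1 [vr | [u2 c2 u21]]] := children_notin_S jk vV vS.
- apply: (degE_ge2 (child_edge c1) (parent_edge vV vr) (set22 _ _) (set21 _ _)).
  apply/eqP => /set2_inj [[u1v _]|[u1p _]].
    by have := child_depth c1; rewrite u1v ltnn.
  have [_ dp _ _] := parentP jk vV vr; have := child_depth c1; rewrite u1p; lia.
apply: (degE_ge2 (child_edge c2) (child_edge c1) (set22 _ _) (set22 _ _)).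
apply/eqP => /set2_inj [[u21' _]|[u2v _]]; first by rewrite u21' eqxx in u21.
by have := child_depth c2; rewrite u2v ltnn.
Qed.

Lemma tree_steiner : steiner_tree e S (tree_verts j) (tree_edges j).
Proof.
split; [exact: tree_subtree | exact: subsetUl |].
move=> v vV deg1; apply/negPn/negP => vS.
by have := tree_deg_notin_S vV vS; rewrite deg1.
Qed.

Lemma two_neighbours_child w n1 n2 : adj n1 w -> adj w n2 -> n1 != n2 ->
  exists u, child j w u.
Proof.
case/tree_adjP => [c1|[_ _ p1]]; first by exists n1.
case/tree_adjP => [[_ _ p2]|c2]; last by exists n2.
by rewrite -p1 -p2 eqxx.
Qed.

End OneTree.

Lemma tree_edges_disjoint p q : p < k -> q < k -> p != q ->
  tree_edges p :&: tree_edges q = set0.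
Proof.
move=> pk qk pq; apply/setP => f; rewrite !inE; apply/negbTE/andP => -[fp fq].
have [v [vV vr fv]] := tree_edgesP fp; have [u [uV ur fu]] := tree_edgesP fq.
have [_ _ _ ownp] := parentP pk vV vr; have [_ _ _ ownq] := parentP qk uV ur.
move: fu; rewrite fv => /set2_inj [[vu pvu]|[vpu pvu]].
  by move: pq; rewrite -ownp -ownq pvu vu eqxx.
by move: pq; rewrite -ownp -ownq pvu -vpu edge_treeC eqxx.
Qed.

Lemma tree_verts_meet p q : p != q -> tree_verts p :&: tree_verts q = S.
Proof.
move=> pq; apply/setP => v; rewrite !inE; case: (v \in S) => //=.
apply/negbTE/andP => -[/eqP ownp /eqP ownq].
by move: pq; rewrite -ownp -ownq eqxx.
Qed.

Lemma tree_interiors_disjoint p q x1 x2 P Q : p < k -> q < k -> p != q ->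
  gpath (tree_edges p) x1 x2 P -> gpath (tree_edges q) x1 x2 Q ->
  [disjoint interior x1 x2 P & interior x1 x2 Q].
Proof.
move=> pk qk pq gP gQ; apply/pred0P => w /=; apply/negbTE/andP => -[wP wQ].
have [a1 [a2 [h1 h2 a12]]] := gpath_interior_adj gP wP.
have [b1 [b2 [g1 g2 b12]]] := gpath_interior_adj gQ wQ.
have [u cp] := two_neighbours_child h1 h2 a12.
have [u' cq] := two_neighbours_child g1 g2 b12.
have wS : w \in S.
  by rewrite -(tree_verts_meet pq) inE (child_in_tree pk cp) (child_in_tree qk cq).
move: pq; rewrite -(internal_inner_tree pk wS (or_intror (ex_intro _ _ cp))).
by rewrite (internal_inner_tree qk wS (or_intror (ex_intro _ _ cq))) eqxx.
Qed.

Lemma rooted_CI_family : has_CI_family e S k.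
Proof.
exists (fun p : 'I_k => (tree_verts p, tree_edges p)); split.
  by move=> p; apply: tree_steiner.
move=> p q; rewrite -val_eqE /= => pq; split.
- exact: tree_edges_disjoint.
- exact: tree_verts_meet.
- by move=> x1 x2 P Q _ _; apply: tree_interiors_disjoint.
Qed.

End RootedTrees.

Section BipartiteRootedTrees.
Variables n1 n2 s i k : nat.
Local Notation m1 := n1.+1.
Local Notation m2 := n2.+1.
Local Notation t := (s - i).
Local Notation G := (Kvert m1 m2).

Variables (root : nat -> nat) (xparent yparent : nat -> nat -> nat).
Variables (own : nat -> nat -> nat) (xinner yinner : nat -> nat).

Definition x_in_tree j a := (a < i) || (a == i + j).
Definition y_in_tree j b := (b < t) || (b == t + j).

Hypothesis root_in_tree : forall j, j < k -> root j < m1 /\ x_in_tree j (root j).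
(* x's hang from y's adjacent to the root, so the depth below decreases along
   parents: 0 for the root, 1 for its y-children, 2 for other x's, 3 for other y's. *)
Hypothesis xparentP : forall j a, j < k -> a < m1 -> x_in_tree j a -> a != root j ->
  [/\ xparent j a < m2, y_in_tree j (xparent j a), yparent j (xparent j a) = root j
    & own a (xparent j a) = j].
Hypothesis yparentP : forall j b, j < k -> b < m2 -> y_in_tree j b ->
  [/\ yparent j b < m1, x_in_tree j (yparent j b) & own (yparent j b) b = j].
Hypothesis x_children : forall j, j < k -> i + j < m1 ->
  exists b1 b2, [/\ b1 < m2, b2 < m2, b1 != b2, y_in_tree j b1 && y_in_tree j b2
    & yparent j b1 = i + j /\ yparent j b2 = i + j].
Hypothesis y_child : forall j, j < k -> t + j < m2 ->
  exists a, [/\ a < m1, x_in_tree j a, a != root j & xparent j a = t + j].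
Hypothesis x_inner : forall j a, j < k -> a < i ->
  a = root j \/ (exists b, [/\ b < m2, y_in_tree j b & yparent j b = a]) -> xinner a = j.
Hypothesis y_inner : forall j b, j < k -> b < t ->
  (exists a, [/\ a < m1, x_in_tree j a, a != root j & xparent j a = b]) -> yinner b = j.

Definition vx a : G := inl (inord a).
Definition vy b : G := inr (inord b).

Lemma vx_val (a : 'I_m1) : vx a = inl a.
Proof. by rewrite /vx inord_val. Qed.

Lemma vy_val (b : 'I_m2) : vy b = inr b.
Proof. by rewrite /vy inord_val. Qed.

Lemma inl_eq_vx (a : 'I_m1) r : r < m1 -> (inl a == vx r) = (a == r :> nat).
Proof. by move=> rm; rewrite (inj_eq (@inl_inj _ _)) -(inj_eq val_inj) /= inordK. Qed.

Definition owner (v : G) := match v with inl a => a - i | inr b => b - t end.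
Definition inner (v : G) := match v with inl a => xinner a | inr b => yinner b end.
Definition edge_owner (u v : G) := match u, v with
  | inl a, inr b | inr b, inl a => own a b | _, _ => 0 end.
Definition troot j := vx (root j).
Definition tparent j (v : G) :=
  match v with inl a => vy (xparent j a) | inr b => vx (yparent j b) end.
Definition tdepth j (v : G) := match v with
  | inl a => if a == root j :> nat then 0 else 2
  | inr b => if yparent j b == root j then 1 else 3 end.

Local Notation tree j := (tree_verts (S_i m1 m2 s i) owner j).

Lemma mem_tree_inl j (a : 'I_m1) : (inl a \in tree j) = x_in_tree j a.
Proof. by rewrite !inE /x_in_tree; case: ltnP => //= ?; apply/eqP/eqP; lia. Qed.

Lemma mem_tree_inr j (b : 'I_m2) : (inr b \in tree j) = y_in_tree j b.
Proof. by rewrite !inE /y_in_tree; case: ltnP => //= ?; apply/eqP/eqP; lia. Qed.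

Lemma tree_root j : j < k -> troot j \in tree j.
Proof. by move=> /root_in_tree [lt xj]; rewrite mem_tree_inl inordK. Qed.

Lemma tree_parentP j v : j < k -> v \in tree j -> v != troot j ->
  [/\ tparent j v \in tree j, tdepth j (tparent j v) < tdepth j v,
      Kadj v (tparent j v) & edge_owner v (tparent j v) = j].
Proof.
move=> jk; case: v => [a|b].
  have [rm _] := root_in_tree jk.
  rewrite mem_tree_inl inl_eq_vx // => xa ar; have [bm yb yr ownb] := xparentP jk (ltn_ord a) xa ar.
  by rewrite /= mem_tree_inr !inordK // yr eqxx (negbTE ar).
rewrite mem_tree_inr => yb _; have [am xa owna] := yparentP jk (ltn_ord b) yb.
rewrite /= mem_tree_inl !inordK //; split => //.
by case: eqP.
Qed.

Lemma tree_children j v : j < k -> v \in tree j -> v \notin S_i m1 m2 s i ->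
  exists2 u1, child (S_i m1 m2 s i) owner troot tparent j v u1 &
    (v != troot j \/ exists2 u2, child (S_i m1 m2 s i) owner troot tparent j v u2 & u2 != u1).
Proof.
move=> jk; case: v => [a|b]; rewrite ?mem_tree_inl ?mem_tree_inr => vV; rewrite inE /= -leqNgt.
  move=> ia; move: vV; rewrite /x_in_tree ltnNge ia /= => xa.
  have am : i + j < m1 by rewrite -(eqP xa).
  have [b1 [b2 [b1m b2m b12 /andP[yb1 yb2] [p1 p2]]]] := x_children jk am.
  exists (vy b1).
    by split; rewrite ?mem_tree_inr ?inordK //= inordK // p1 -(eqP xa) vx_val.
  right; exists (vy b2).
    by split; rewrite ?mem_tree_inr ?inordK //= inordK // p2 -(eqP xa) vx_val.
  by rewrite (inj_eq (@inr_inj _ _)) -(inj_eq val_inj) /= !inordK // eq_sym.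
move=> tb; move: vV; rewrite /y_in_tree ltnNge tb /= => yb.
have bm : t + j < m2 by rewrite -(eqP yb).
have [a [am xa ar pa]] := y_child jk bm.
exists (vx a); last by left.
split; rewrite ?mem_tree_inl ?inordK //.
  by rewrite inl_eq_vx ?inordK //; case: (root_in_tree jk).
by rewrite /= inordK // pa -(eqP yb) vy_val.
Qed.

Lemma tree_internal_inner j v : j < k -> v \in S_i m1 m2 s i ->
  internal (S_i m1 m2 s i) owner troot tparent j v -> inner v = j.
Proof.
move=> jk; case: v => [a|b]; rewrite inE /= => vS.
  case=> [|[[a'|b'] [uV _ pu]]] //.
    rewrite /troot /vx => -[ar]; apply: x_inner => //; left.
    by rewrite ar inordK //; case: (root_in_tree jk).
  rewrite mem_tree_inr in uV; have [am _ _] := yparentP jk (ltn_ord b') uV.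
  apply: x_inner => //; right; exists b'; split => //.
  by case: pu => <-; rewrite inordK.
case=> [//|[[a'|b'] [uV ur pu]]] //.
rewrite mem_tree_inl in uV.
have ar : a' != root j :> nat.
  by move: ur; rewrite inl_eq_vx //; case: (root_in_tree jk).
have [bm _ _ _] := xparentP jk (ltn_ord a') uV ar.
apply: y_inner => //; exists a'; split => //.
by case: pu => <-; rewrite inordK.
Qed.

Lemma bipartite_CI_family : has_CI_family (@Kadj m1 m2) (S_i m1 m2 s i) k.
Proof.
apply: (@rooted_CI_family _ _ _ _ owner inner edge_owner troot tparent tdepth).
- by case=> [a|b] [a'|b'].
- exact: tree_root.
- by move=> j jk v; apply: tree_parentP.
- by move=> j jk v; apply: tree_children.
- by move=> j jk v; apply: tree_internal_inner.
Qed.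

End BipartiteRootedTrees.

Lemma bipartite_leq_kappa_star m1 m2 (S : {set Kvert m1 m2}) k :
  k <= m1 + m2 -> has_CI_family (@Kadj m1 m2) S k -> k <= kappa_star (@Kadj m1 m2) S.
Proof. by move=> km; apply: leq_kappa_star; rewrite card_sum !card_ord; nia. Qed.

(* Innermost conditionals first, so that none ends up inside a hypothesis. *)
Ltac case_ifs := repeat match goal with
  | |- context [if ?c then _ else _] =>
      lazymatch c with context [if _ then _ else _] => fail | _ => case: (boolP c) => ? end
  end.

Section HubTrees.
Variables n1 n2 s i : nat.
Local Notation m1 := n1.+1.
Local Notation m2 := n2.+1.
Local Notation t := (s - i).
Local Notation B := (m2 - t).
Hypotheses (i_gt0 : 0 < i) (i_lt_s : i < s) (m1_le_m2 : m1 <= m2).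

Definition hub j := if j < B then t + j else j - B.
Definition hub_owner a b := if i <= a then a - i else if t <= b then b - t else b + B.

Lemma hub_trees_CI_family : has_CI_family (@Kadj m1 m2) (S_i m1 m2 s i) (m1 - i).
Proof.
(* Terminal x's are leaves of every hub tree, so their inner tree is irrelevant. *)
apply: (@bipartite_CI_family _ _ _ _ _ (fun j => i + j) (fun j _ => hub j) (fun j _ => i + j)
  hub_owner (fun _ => 0) (fun b => b + B)); rewrite /x_in_tree /y_in_tree /hub /hub_owner.
- move=> j jk; split; lia.
- by move=> j a jk am xa ar; split; case_ifs; lia.
- by move=> j b jk bm yb; split; case_ifs; lia.
- move=> j jk _; exists 0, (if j < B then t + j else 1).
  by case_ifs; split; lia.
- by move=> j jk tj; exists 0; split; case_ifs; lia.
- move=> j a jk ai [|[b [_ _]]]; lia.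
- by move=> j b jk bt [a [_ _ _]]; case_ifs; lia.
Qed.

End HubTrees.

Section TwoHubTrees.
Variables n1 n2 s i K : nat.
Local Notation m1 := n1.+1.
Local Notation m2 := n2.+1.
Local Notation t := (s - i).
Local Notation A := (m1 - i).
Local Notation B := (m2 - t).
Local Notation D := (A - B).
Hypotheses (i_gt0 : 0 < i) (m1_le_m2 : m1 <= m2).
Hypotheses (B_le_A : B <= A) (K_le_i : K <= i) (K2_le : K + K <= m1 - B).

(* For j < B tree j is the hub tree of the previous section.  In tree B + l,
   x_a hangs from y_{K+l} if a < K and from y_l otherwise, y_b hangs from x_l if
   b < K and b <> l, and the remaining y's hang from the root, which is x_{i+B+l}
   for l < D and the terminal x_{K+l-D} afterwards. *)
Definition two_hub_root j := if j < A then i + j else K + (j - A).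
Definition two_hub_xparent j a :=
  if j < B then t + j else if a < K then K + (j - B) else j - B.
Definition two_hub_yparent j b :=
  if (B <= j) && (b < K) && (b != j - B) then j - B else two_hub_root j.
Definition two_hub_owner a b :=
  if i <= a then a - i else if t <= b then b - t else
  B + (if a < K then (if b < K then a else b - K) else (if b < K then b else a - K + D)).

Lemma two_hub_trees_CI_family : has_CI_family (@Kadj m1 m2) (S_i m1 m2 s i) (B + K).
Proof.
apply: (@bipartite_CI_family _ _ _ _ _ two_hub_root two_hub_xparent two_hub_yparent
  two_hub_owner (fun a => B + (if a < K then a else a - K + D))
  (fun b => B + (if b < K then b else b - K)));
  rewrite /x_in_tree /y_in_tree /two_hub_yparent /two_hub_root /two_hub_xparent /two_hub_owner.
- by move=> j jk; split; case_ifs; lia.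
- by move=> j a jk am xa ar; split; case_ifs; lia.
- by move=> j b jk bm yb; split; case_ifs; lia.
- move=> j jk jA; exists (if j < B then 0 else j - B), (if j < B then t + j else K).
  by split; case_ifs; lia.
- by move=> j jk tj; exists 0; split; case_ifs; lia.
- by move=> j a jk ai [|[b [_ _]]]; case_ifs; lia.
- by move=> j b jk bt [a [_ _ _]]; case_ifs; lia.
Qed.

End TwoHubTrees.

Theorem theorem3p6 (m1 m2 s i : nat) :
  2 <= m1 -> m1 <= m2 ->
  1 <= i -> s <= m2 + i ->            (* max{1, s-m2} <= i *)
  i <= m1 -> i + 1 <= s ->            (* i <= min{m1, s-1} *)
  m2 + 3 <= m1 + s ->                 (* s >= m2 - m1 + 3 *)
  2 <= 2 * i -> 2 * i + m2 <= m1 + s -> (* 2 <= 2i <= m1 + s - m2 *)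
  (if 3 * i + m2 <= m1 + s            (* 2i <= 2(m1+s-m2)/3 *)
   then m1 - i
   else m2 - (s - i) + (m1 + s - m2 - i) %/ 2)
  <= kappa_star (@Kadj m1 m2) (S_i m1 m2 s i).
Proof.
case: m1 m2 => [|n1] [|n2] //; move=> _ m12 i_gt0 s_le i_le i_lt _ _ c_ge.
case: ifP => c3.
  apply: bipartite_leq_kappa_star; first lia.
  by apply: hub_trees_CI_family; lia.
have -> : n1.+1 + s - n2.+1 - i = n1.+1 - (n2.+1 - (s - i)) by lia.
apply: bipartite_leq_kappa_star; first lia.
(* K <= i is where the failure of 3i + m2 <= m1 + s is used. *)
apply: two_hub_trees_CI_family; lia.
Qed.
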